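(* Let $\mathcal{P}_1\subseteq\mathcal{P}_2\subseteq\mathbb{Z}_{\geq0}$ with $0\in\mathcal{P}_1$ and $\mathcal{P}_1-2\neq\emptyset$. Then $\tau_{\mathcal{P}_1}\geq\tau_{\mathcal{P}_2}$.
   Context: For $\mathcal{P}\subseteq\mathbb{Z}_{\ge0}$, $e_\mathcal{P}(z)=\sum_{n\in\mathcal{P}}z^n/n!$ and $\mathcal{P}-2=\{n-2:n\in\mathcal{P},n\ge2\}$. When $0\in\mathcal{P}$ and $\mathcal{P}-2\ne\emptyset$, $\tau_\mathcal{P}$ denotes the unique $\tau\in\mathbb{R}_{>0}$ with $e_\mathcal{P}(\tau)-\tau e_\mathcal{P}'(\tau)=0$. *)

From Stdlib Require Import Reals Factorial.
From Coquelicot Require Import Coquelicot.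
Open Scope R_scope.

(* A subset P of Z_{>=0} is represented by its characteristic function nat -> bool. *)

Definition eP_coef (P : nat -> bool) (n : nat) : R :=
  if P n then / INR (Factorial.fact n) else 0.

(* e_P(z) = sum_{n in P} z^n / n!  (power series, converges on all of R) *)
Definition eP (P : nat -> bool) (z : R) : R := PSeries (eP_coef P) z.

Definition minus2_nonempty (P : nat -> bool) : Prop :=
  exists n : nat, P n = true /\ (2 <= n)%nat.

Definition is_tau (P : nat -> bool) (t : R) : Prop :=
  0 < t /\ eP P t - t * Derive (eP P) t = 0.

(** Write [f_P(t) = e_P(t) - t e_P'(t) = sum_n (1 - n) t^n / n!] over [n ∈ P].
    The terms for [n = 0] and [n = 1] do not depend on [t] or on [P ⊇ {0}],
    and every term with [n ≥ 2] is nonpositive, decreasing in [t] and in [P].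
    So if [t1 < t2], the series [f_P2(t2)] is termwise at most [f_P1(t1)],
    strictly so at any [n ≥ 2] in [P1]; hence [f_P2(t2) < f_P1(t1)], and the
    two cannot both vanish. *)
From Stdlib Require Import Reals Lra Lia Factorial.
From Coquelicot Require Import Coquelicot.
Open Scope R_scope.

Lemma Series_ge_term (a : nat -> R) (n : nat) :
  (forall k, 0 <= a k) -> ex_series a -> a n <= Series a.
Proof.
  intros Ha Hex.
  rewrite (Series_incr_n a (S n)) by (lia || exact Hex). simpl Init.Nat.pred.
  assert (Htail : 0 <= Series (fun k => a (S n + k)%nat)).
  { apply Rle_trans with (Series (fun k => 0 * a (S n + k)%nat)).
    - rewrite Series_scal_l. lra.
    - apply Series_le; [intro k; rewrite Rmult_0_l; split; [lra | apply Ha]|].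
      now apply (ex_series_incr_n a (S n)). }
  destruct n as [|m]; simpl sum_f_R0; [lra|].
  pose proof (cond_pos_sum a m Ha). lra.
Qed.

Lemma Series_lt (a b : nat -> R) (n : nat) :
  ex_series a -> ex_series b ->
  (forall k, a k <= b k) -> a n < b n -> Series a < Series b.
Proof.
  intros Ha Hb Hle Hlt.
  assert (Hdiff : b n - a n <= Series (fun k => b k - a k)).
  { apply (Series_ge_term (fun k => b k - a k)).
    - intro k. specialize (Hle k). lra.
    - now apply (ex_series_minus b a). }
  rewrite Series_minus in Hdiff by assumption. lra.
Qed.

Lemma pow_lt_compat_l (x y : R) (n : nat) :
  0 <= x < y -> n <> 0%nat -> x ^ n < y ^ n.
Proof.
  intros [Hx Hxy] Hn. destruct n as [|m]; [lia|]. simpl.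
  assert (0 < y ^ m) by (apply pow_lt; lra).
  apply Rle_lt_trans with (x * y ^ m).
  - apply Rmult_le_compat_l; [lra | apply pow_incr; lra].
  - apply Rmult_lt_compat_r; lra.
Qed.

Lemma CV_radius_le_abs (a b : nat -> R) :
  (forall n, Rabs (a n) <= Rabs (b n)) -> Rbar_le (CV_radius b) (CV_radius a).
Proof.
  intros Hab.
  destruct (CV_radius_bounded a) as [Ha_ub _], (CV_radius_bounded b) as [_ Hb_least].
  apply Hb_least. intros r [M HM]. apply Ha_ub. exists M. intro n.
  apply Rle_trans with (2 := HM n). rewrite !Rabs_mult.
  apply Rmult_le_compat_r; [apply Rabs_pos | apply Hab].
Qed.

Lemma CV_radius_inv_fact : CV_radius (fun n => / INR (fact n)) = p_infty.
Proof.
  assert (Hfact : forall n, INR (fact n) <> 0) by (intro n; apply INR_fact_neq_0).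
  apply CV_radius_infinite_DAlembert; [intro n; apply Rinv_neq_0_compat, Hfact|].
  apply is_lim_seq_ext with (fun n => / INR (S n)).
  - intro n. rewrite fact_simpl, mult_INR, Rabs_pos_eq.
    + field. split; [apply Hfact | apply not_0_INR; lia].
    + rewrite <- mult_INR, <- fact_simpl. unfold Rdiv.
      rewrite Rinv_inv. apply Rmult_le_pos; [|apply pos_INR].
      left. apply Rinv_0_lt_compat, INR_fact_lt_0.
  - apply (is_lim_seq_inv _ p_infty); [|discriminate].
    apply (is_lim_seq_incr_1 INR p_infty), is_lim_seq_INR.
Qed.

Lemma eP_coef_nonneg (P : nat -> bool) (n : nat) : 0 <= eP_coef P n.
Proof.
  unfold eP_coef. destruct (P n); [|lra].
  left. apply Rinv_0_lt_compat, INR_fact_lt_0.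
Qed.

Lemma eP_coef_le_inv_fact (P : nat -> bool) (n : nat) :
  eP_coef P n <= / INR (fact n).
Proof.
  pose proof (eP_coef_nonneg (fun _ => true) n).
  unfold eP_coef in *. destruct (P n); lra.
Qed.

Lemma CV_radius_eP_coef (P : nat -> bool) : CV_radius (eP_coef P) = p_infty.
Proof.
  apply Rbar_le_antisym; [destruct (CV_radius (eP_coef P)); simpl; tauto|].
  rewrite <- CV_radius_inv_fact. apply CV_radius_le_abs. intro n.
  pose proof (eP_coef_nonneg P n). pose proof (eP_coef_le_inv_fact P n).
  rewrite !Rabs_pos_eq; lra.
Qed.

Definition intercept_coef (P : nat -> bool) (n : nat) : R :=
  (1 - INR n) * eP_coef P n.

Lemma is_pseries_eP_intercept (P : nat -> bool) (t : R) :
  is_pseries (intercept_coef P) t (eP P t - t * Derive (eP P) t).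
Proof.
  assert (Hr : Rbar_lt (Rabs t) (CV_radius (eP_coef P)))
    by (rewrite CV_radius_eP_coef; exact I).
  pose proof (PSeries_correct _ _ (CV_radius_inside _ _ Hr)) as He.
  pose proof (is_pseries_incr_1 _ _ _ (is_pseries_derive _ _ Hr)) as Hd.
  apply (is_pseries_ext (PS_minus (eP_coef P) (PS_incr_1 (PS_derive (eP_coef P))))).
  - intros [|n]; unfold intercept_coef, PS_minus, PS_incr_1, PS_derive, plus, opp, zero;
      simpl; ring.
  - exact (is_pseries_minus _ _ _ _ _ He Hd).
Qed.

Section Monotonicity.

Variables (P1 P2 : nat -> bool).
Hypothesis Hsub : forall n, P1 n = true -> P2 n = true.
Hypothesis H0 : P1 0%nat = true.

Lemma eP_coef_le_subset (n : nat) : eP_coef P1 n <= eP_coef P2 n.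
Proof.
  unfold eP_coef. destruct (P1 n) eqn:HP.
  - rewrite (Hsub _ HP). lra.
  - apply (eP_coef_nonneg P2).
Qed.

Lemma intercept_term_le (s t : R) (n : nat) :
  0 <= s <= t -> intercept_coef P2 n * t ^ n <= intercept_coef P1 n * s ^ n.
Proof.
  intros Hst. unfold intercept_coef.
  destruct n as [|[|n]].
  - unfold eP_coef. rewrite H0, (Hsub _ H0). lra.
  - simpl. lra.
  - assert (HI : 2 <= INR (S (S n))) by (rewrite !S_INR; pose proof (pos_INR n); lra).
    assert (Hc : eP_coef P1 (S (S n)) * s ^ S (S n) <= eP_coef P2 (S (S n)) * t ^ S (S n)).
    { apply Rmult_le_compat; [apply eP_coef_nonneg | apply pow_le; lra
                              | apply eP_coef_le_subset | apply pow_incr; lra]. }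
    nra.
Qed.

Lemma intercept_term_lt (s t : R) (n : nat) :
  P1 n = true -> (2 <= n)%nat -> 0 <= s < t ->
  intercept_coef P2 n * t ^ n < intercept_coef P1 n * s ^ n.
Proof.
  intros HP Hn Hst. unfold intercept_coef, eP_coef. rewrite HP, (Hsub _ HP).
  assert (HI : 2 <= INR n) by (apply (le_INR 2) in Hn; simpl in Hn; lra).
  assert (Hpow : s ^ n < t ^ n) by (apply pow_lt_compat_l; [lra | lia]).
  assert (Hc : 0 < (INR n - 1) * / INR (fact n)).
  { apply Rmult_lt_0_compat; [lra | apply Rinv_0_lt_compat, INR_fact_lt_0]. }
  nra.
Qed.

Lemma eP_intercept_lt (s t : R) (n : nat) :
  P1 n = true -> (2 <= n)%nat -> 0 <= s < t ->
  eP P2 t - t * Derive (eP P2) t < eP P1 s - s * Derive (eP P1) s.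
Proof.
  intros HP Hn Hst.
  pose proof (is_pseries_eP_intercept P1 s) as H1.
  pose proof (is_pseries_eP_intercept P2 t) as H2.
  rewrite <- (is_pseries_unique _ _ _ H1), <- (is_pseries_unique _ _ _ H2).
  apply (Series_lt _ _ n).
  - apply ex_pseries_R. eexists. exact H2.
  - apply ex_pseries_R. eexists. exact H1.
  - intro k. apply intercept_term_le. lra.
  - now apply intercept_term_lt.
Qed.

End Monotonicity.

Theorem lemma7p4 (P1 P2 : nat -> bool)
  (Hsub : forall n, P1 n = true -> P2 n = true)
  (H0 : P1 0%nat = true)
  (H2 : minus2_nonempty P1)
  (t1 t2 : R) (Ht1 : is_tau P1 t1) (Ht2 : is_tau P2 t2) :
  t1 >= t2.
Proof.
  destruct Ht1 as [Ht1_pos Ht1_root], Ht2 as [_ Ht2_root].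
  destruct H2 as [n [HPn Hn]].
  apply Rnot_lt_ge. intros Hlt.
  assert (Hcontra : eP P2 t2 - t2 * Derive (eP P2) t2 < eP P1 t1 - t1 * Derive (eP P1) t1)
    by (apply (eP_intercept_lt P1 P2 Hsub H0 _ _ n HPn Hn); lra).
  lra.
Qed.
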